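(* Let $\alpha,\beta$ be propositional formulas, $V=V(\alpha)\cup V(\beta)$, and let $B_1,\dots,B_n$ enumerate $V(\beta)\setminus V(\alpha)$. If $\alpha\mathbin{|\!\sim}_{cw}\beta$, then there is a formula $\gamma$ with $V(\gamma)\subseteq V(\alpha)\cap V(\beta)$ such that $\alpha\mathbin{|\!\sim}_{cw}\gamma$ and $\gamma\land\neg B_1\land\dots\land\neg B_n\models\beta$ (in $\mathbf{HT}$). In particular $\gamma\mathbin{|\!\sim}_{cw}\beta$.
   Context: $V(\varphi)$ is the set of atoms of $\varphi$. Here-and-there logic $\mathbf{HT}(V)$ over atom set $V$: interpretations are pairs $\langle H,T\rangle$, $H\subseteq T\subseteq V$, viewed as two-world Kripke models ($h\le t$; atoms true at $h$: $H$, at $t$: $T$) with intuitionistic Kripke clauses, $\neg\varphi:=\varphi\to\bot$; $\mathcal M\models\varphi$ iff $\varphi$ true at both worlds; $\Pi\models\varphi$ (equivalently $\Pi\vdash\varphi$) iff every model of $\Pi$ is a model of $\varphi$. An equilibrium model of $\Pi$ over $V$ is a model $\langle T,T\rangle$ of $\Pi$ in $\mathbf{HT}(V)$ with no model $\langle H,T\rangle$ of $\Pi$ with $H\subsetneq T$; $E_V(\Pi)$ is the set of these. Closed-world equilibrium entailment: if $\Pi$ is non-empty and has equilibrium models, $\Pi\mathbin{|\!\sim}_{cw}\varphi$ iff $\mathcal M\models\varphi$ for every $\mathcal M\in E_{V(\Pi)\cup V(\varphi)}(\Pi)$; otherwise $\Pi\mathbin{|\!\sim}_{cw}\varphi$ iff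 $\Pi\vdash\varphi$ in $\mathbf{HT}$. A formula $\alpha$ is identified with $\{\alpha\}$. *)

From mathcomp Require Import all_boot.
Set Implicit Arguments. Unset Strict Implicit. Unset Printing Implicit Defensive.

Inductive form : Type :=
| Bot : form
| Atom : nat -> form
| And : form -> form -> form
| Or : form -> form -> form
| Imp : form -> form -> form.

Definition Neg (p : form) : form := Imp p Bot.

Fixpoint atoms (p : form) : seq nat :=
  match p with
  | Bot => [::]
  | Atom a => [:: a]
  | And p q | Or p q | Imp p q => atoms p ++ atoms q
  end.

(* Truth at world t of the HT model <H,T> (only T matters: classical) *)
Fixpoint sat_t (T : nat -> bool) (p : form) : Prop :=
  match p with
  | Bot => False
  | Atom a => T a
  | And p q => sat_t T p /\ sat_t T q
  | Or p q => sat_t T p \/ sat_t T q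
  | Imp p q => sat_t T p -> sat_t T q
  end.

(* Truth at world h (h <= t), intuitionistic Kripke clauses *)
Fixpoint sat_h (H T : nat -> bool) (p : form) : Prop :=
  match p with
  | Bot => False
  | Atom a => H a
  | And p q => sat_h H T p /\ sat_h H T q
  | Or p q => sat_h H T p \/ sat_h H T q
  | Imp p q => (sat_h H T p -> sat_h H T q) /\ (sat_t T p -> sat_t T q)
  end.

Definition ht_model (H T : nat -> bool) (p : form) : Prop :=
  sat_h H T p /\ sat_t T p.

Definition subpred (H T : nat -> bool) : Prop := forall x, H x -> T x.

Definition ht_interp (V : seq nat) (H T : nat -> bool) : Prop :=
  subpred H T /\ forall x, T x -> x \in V.

Definition ht_entails (a p : form) : Prop :=
  forall H T : nat -> bool, subpred H T -> ht_model H T a -> ht_model H T p.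

Definition eq_model (V : seq nat) (a : form) (T : nat -> bool) : Prop :=
  ht_interp V T T /\ ht_model T T a /\
  ~ (exists H : nat -> bool,
        ht_interp V H T /\ (exists x, T x /\ ~~ H x) /\ ht_model H T a).

(* Closed-world equilibrium entailment {a} |~cw p ({a} is non-empty) *)
Definition cw_entails (a p : form) : Prop :=
  let V := atoms a ++ atoms p in
  ((exists T, eq_model V a T) ->
     forall T, eq_model V a T -> ht_model T T p) /\
  (~ (exists T, eq_model V a T) -> ht_entails a p).

Definition new_atoms (a b : form) : seq nat :=
  undup [seq x <- atoms b | x \notin atoms a].

Definition and_negs (g : form) (Bs : seq nat) : form :=
  foldl (fun acc B => And acc (Neg (Atom B))) g Bs.

From mathcomp Require Import all_boot.
From mathcomp Require Import boolp.
Set Implicit Arguments. Unset Strict Implicit. Unset Printing Implicit Defensive.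

(* Let C be the atoms common to a and b.  If a has equilibrium models, take for g
   the disjunction of the characteristic formulas of their restrictions to C.
   Every equilibrium model of a satisfies g; and a model of g in which all the
   B_i are false agrees on every atom of b with an equilibrium model of a (which
   is false outside V(a)), hence satisfies b.  Otherwise a |= b in HT, and g is
   the disjunction of the characteristic formulas of the C-projections of the
   HT-models of a: a model of g agrees on C with some HT-model of a, up to
   collapsing its here-world on the gap between here and there, and HT-models of
   a and of b that agree on C amalgamate, so g |= b.  Finally g |~cw b: in the
   first case because equilibrium models of g vanish outside C, so they make
   all the B_i false. *)

Definition Top : form := Imp Bot Bot.

Section BigConnectives.
Variable I : eqType.
Implicit Types (f : I -> form) (s : seq I).

Fixpoint bigAnd f s : form := if s is i :: s' then And (f i) (bigAnd f s') else Top.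
Fixpoint bigOr f s : form := if s is i :: s' then Or (f i) (bigOr f s') else Bot.

Lemma atoms_bigAnd f s : atoms (bigAnd f s) = flatten [seq atoms (f i) | i <- s].
Proof. by elim: s => //= i s ->. Qed.

Lemma atoms_bigOr f s : atoms (bigOr f s) = flatten [seq atoms (f i) | i <- s].
Proof. by elim: s => //= i s ->. Qed.

Lemma bigAnd_sat (sat : form -> Prop) f s :
  (forall p q, sat (And p q) <-> sat p /\ sat q) -> sat Top ->
  sat (bigAnd f s) <-> {in s, forall i, sat (f i)}.
Proof.
move=> satAnd satTop; elim: s => [|i s IH] /=; first by split=> // _ j.
rewrite satAnd IH; split=> [[fi fs] j|fis].
  by rewrite inE => /predU1P [->|/fs].
by split=> [|j js]; apply: fis; rewrite inE ?eqxx ?js ?orbT.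
Qed.

Lemma sat_h_bigAnd H T f s :
  sat_h H T (bigAnd f s) <-> {in s, forall i, sat_h H T (f i)}.
Proof. by apply: bigAnd_sat. Qed.

Lemma sat_t_bigAnd T f s : sat_t T (bigAnd f s) <-> {in s, forall i, sat_t T (f i)}.
Proof. by apply: bigAnd_sat => //; split. Qed.

Lemma sat_h_bigOr H T f s :
  sat_h H T (bigOr f s) -> exists2 i, i \in s & sat_h H T (f i).
Proof.
elim: s => [|i s IH] //= [fi|/IH [j js fj]]; first by exists i; rewrite ?mem_head.
by exists j; rewrite // inE js orbT.
Qed.

Lemma ht_model_bigOr H T f s i : i \in s -> ht_model H T (f i) -> ht_model H T (bigOr f s).
Proof.
elim: s => // j s IH; rewrite inE => /predU1P [<- [hi ti]|/IH fs /fs [hs ts]].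
  by split; left.
by split; right.
Qed.

End BigConnectives.

Lemma eq_in_sat p H T H' T' :
  {in atoms p, H =1 H'} -> {in atoms p, T =1 T'} ->
  (sat_h H T p <-> sat_h H' T' p) /\ (sat_t T p <-> sat_t T' p).
Proof.
elim: p => [|x|p IHp q IHq|p IHp q IHq|p IHp q IHq] /= eH eT; try tauto.
  by rewrite eH ?eT ?mem_head.
all: have [lH lT] : {in atoms p, H =1 H'} /\ {in atoms p, T =1 T'}
       by split=> y yp; [apply: eH | apply: eT]; rewrite mem_cat yp.
all: have [rH rT] : {in atoms q, H =1 H'} /\ {in atoms q, T =1 T'}
       by split=> y yq; [apply: eH | apply: eT]; rewrite mem_cat yq orbT.
all: by have := IHp lH lT; have := IHq rH rT; tauto.
Qed.

Lemma eq_in_ht_model p H T H' T' :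
  {in atoms p, H =1 H'} -> {in atoms p, T =1 T'} ->
  ht_model H T p -> ht_model H' T' p.
Proof. by move=> eH eT [hp tp]; have [[+ _] [+ _]] := eq_in_sat eH eT; split; auto. Qed.

Lemma sat_h_sat_t H T p : subpred H T -> sat_h H T p -> sat_t T p.
Proof.
move=> sHT; elim: p => [|x|p IHp q IHq|p IHp q IHq|p IHp q IHq] //=.
- exact: sHT.
- by case; split; auto.
- by case; [left|right]; auto.
- by case.
Qed.

Lemma sat_hTT T p : sat_h T T p <-> sat_t T p.
Proof. by elim: p => [|x|p IHp q IHq|p IHp q IHq|p IHp q IHq] /=; tauto. Qed.

Lemma ht_modelTT T p : ht_model T T p <-> sat_t T p.
Proof. by rewrite /ht_model sat_hTT; tauto. Qed.

Lemma ht_model_and_negs H T g Bs : subpred H T ->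
  ht_model H T (and_negs g Bs) <-> ht_model H T g /\ {in Bs, forall B, ~~ T B}.
Proof.
move=> sHT; elim: Bs g => [|B Bs IH] g /=; first by split=> // [[]].
rewrite IH; split=> [[[[hg _] [tg nTB]] nTs]|[[hg tg] nTs]].
  split=> // B'; rewrite inE => /predU1P [->|/nTs //]; exact/negP.
have nTB : ~ T B by apply/negP/nTs; rewrite mem_head.
split; first by split; split=> //; split=> // /sHT.
by move=> B' B's; apply: nTs; rewrite inE B's orbT.
Qed.

Lemma mem_new_atoms a b x :
  (x \in new_atoms a b) = (x \in atoms b) && (x \notin atoms a).
Proof. by rewrite mem_undup mem_filter andbC. Qed.

Lemma eq_model_support V a T : eq_model V a T -> forall x, T x -> x \in atoms a.
Proof.
move=> [[_ TV] [aTT noSmaller]] x Tx; apply/idPn => xa; apply: noSmaller.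
exists (fun y => T y && (y != x)); split; first by split=> [y /andP [] | ].
split; first by exists x; rewrite Tx eqxx.
apply: eq_in_ht_model aTT => // y ya; have ->: y != x by apply: contraNneq xa => <-.
by rewrite andbT.
Qed.

Lemma eq_model_transfer V V' a T :
  {subset atoms a <= V} -> {subset atoms a <= V'} -> eq_model V a T -> eq_model V' a T.
Proof.
move=> aV aV' E; have supp := eq_model_support E.
case: E => [[_ _] [aTT noSmaller]]; split; first by split=> // x /supp /aV'.
split=> // [[H [[sHT _] smaller]]]; apply: noSmaller; exists H.
by split=> //; split=> // x /supp /aV.
Qed.

Fixpoint powerseq (T : Type) (s : seq T) : seq (seq T) :=
  if s is x :: s' then powerseq s' ++ map (cons x) (powerseq s') else [:: [::]].

Lemma mem_powerseq_filter (T : eqType) (P : pred T) s : filter P s \in powerseq s.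
Proof.
elim: s => [|x s IH] //=; case: (P x); rewrite mem_cat ?IH //.
by rewrite (map_f (cons x) IH) orbT.
Qed.

Definition common (a b : form) : seq nat := [seq x <- atoms b | x \in atoms a].

Lemma mem_common a b x : (x \in common a b) = (x \in atoms a) && (x \in atoms b).
Proof. by rewrite mem_filter. Qed.

Section Interpolant.
Variable C : seq nat.
Implicit Types (H T : nat -> bool) (p : seq nat * seq nat).

Definition ht_proj H T : seq nat * seq nat := ([seq x <- C | H x], [seq x <- C | T x]).

Definition gap p : seq nat := [seq x <- C | (x \in p.2) && (x \notin p.1)].

Definition ht_lit p (x : nat) : form :=
  if x \in p.1 then Atom x else if x \in p.2 then Neg (Neg (Atom x)) else Neg (Atom x).

Definition ht_char p : form :=
  And (bigAnd (ht_lit p) C)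
      (bigAnd (fun rs : nat * nat => Imp (Atom rs.1) (Atom rs.2))
              [seq (r, s) | r <- gap p, s <- gap p]).

Lemma atoms_ht_char p : {subset atoms (ht_char p) <= C}.
Proof.
move=> x; rewrite /= mem_cat !atoms_bigAnd => /orP [] /flatten_mapP [y].
  by rewrite /ht_lit; case: ifP => _; [|case: ifP => _]; rewrite /= inE => + /eqP ->.
move=> /allpairsP [[r s] [/= + + ->]]; rewrite !mem_filter.
by move=> /andP [_ rC] /andP [_ sC]; rewrite /= !inE => /orP [] /eqP ->.
Qed.

Lemma ht_model_ht_char H T : subpred H T -> ht_model H T (ht_char (ht_proj H T)).
Proof.
move=> sHT; split; split.
- apply/sat_h_bigAnd => x xC; rewrite /ht_lit /= !mem_filter xC !andbT.
  case: (boolP (H x)) => // Hx; case: (boolP (T x)) => Tx /=.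
    by split; [case=> _ /(_ Tx) | move/(_ Tx)].
  by split; apply/negP.
- apply/sat_h_bigAnd => rs /allpairsP [[r s] [/= + + ->]] /=.
  rewrite !mem_filter /= => /andP [/andP [_ nHr] rC] /andP [/andP [/andP [Ts _] _] _].
  by split=> // Hr; rewrite Hr rC in nHr.
- apply/sat_t_bigAnd => x xC; rewrite /ht_lit /= !mem_filter xC !andbT.
  case: (boolP (H x)) => Hx; first exact: sHT.
  by case: (boolP (T x)) => Tx /=; [move/(_ Tx) | apply/negP].
- apply/sat_t_bigAnd => rs /allpairsP [[r s] [/= _ + ->]] /=.
  by rewrite !mem_filter /= => /andP [/andP [/andP [-> _] _] _].
Qed.

(* The formula [ht_char] fixes [T] on [C] but leaves [H] free on the gap; the
   implications between gap atoms force [H] to be empty or full there, so [H]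
   coincides on [C] with the [H] or the [T] of the projected interpretation. *)
Lemma ht_char_agree H T H1 T1 : subpred H T -> subpred H1 T1 ->
  sat_h H T (ht_char (ht_proj H1 T1)) ->
  {in C, T =1 T1} /\ ({in C, H =1 H1} \/ {in C, H =1 T1}).
Proof.
move=> sHT sHT1 [/sat_h_bigAnd lits /sat_h_bigAnd imps].
have litP x : x \in C -> [/\ H1 x -> H x, H1 x -> T x & T x = T1 x].
  move=> xC; have := lits x xC; rewrite /ht_lit /= !mem_filter xC !andbT.
  case: (boolP (H1 x)) => [H1x Hx|_]; first by rewrite (sHT x Hx) (sHT1 x H1x); split.
  case: (boolP (T1 x)) => _ /= [_ nTx]; split=> //.
    by case: (T x) nTx => // /(_ notF).
  by case: (T x) nTx => // /(_ isT).
have inGap x : x \in C -> ~~ H1 x -> T1 x -> x \in gap (ht_proj H1 T1).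
  by move=> xC nH1x T1x; rewrite !mem_filter /= xC T1x (negbTE nH1x).
split=> [x /litP [_ _ //]|].
case: (pselect (exists2 r, r \in gap (ht_proj H1 T1) & H r)) => [[r rg Hr]|noH].
- right=> x xC; have [H1H _ TT1] := litP x xC.
  case: (boolP (H1 x)) => [H1x | nH1x]; first by rewrite (H1H H1x) (sHT1 x H1x).
  case: (boolP (T1 x)) => T1x.
    by have [+ _] := imps (r, x) (allpairs_f pair rg (inGap x xC nH1x T1x)); apply.
  by apply/negbTE/negP => /sHT; rewrite TT1 (negbTE T1x).
- left=> x xC; have [H1H _ TT1] := litP x xC.
  case: (boolP (H1 x)) => [/H1H -> // | nH1x]; apply/negbTE/negP => Hx.
  apply: noH; exists x => //; apply: inGap => //; by rewrite -TT1 sHT.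
Qed.

Definition interpolant (P : (nat -> bool) -> (nat -> bool) -> Prop) : form :=
  bigOr ht_char [seq p <- [seq (L0, L1) | L0 <- powerseq C, L1 <- powerseq C]
                | `[< exists H T, [/\ subpred H T, P H T & p = ht_proj H T] >]].

Variable P : (nat -> bool) -> (nat -> bool) -> Prop.

Lemma atoms_interpolant : {subset atoms (interpolant P) <= C}.
Proof. by move=> x; rewrite atoms_bigOr => /flatten_mapP [p _ /atoms_ht_char]. Qed.

Lemma ht_model_interpolant H T : subpred H T -> P H T -> ht_model H T (interpolant P).
Proof.
move=> sHT PHT; apply: (ht_model_bigOr (i := ht_proj H T)); last exact: ht_model_ht_char.
rewrite mem_filter (allpairs_f pair (mem_powerseq_filter _ _) (mem_powerseq_filter _ _)).
by rewrite andbT; apply/asboolP; exists H, T.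
Qed.

Lemma interpolant_agree H T : subpred H T -> sat_h H T (interpolant P) ->
  exists H1 T1, [/\ subpred H1 T1, P H1 T1, {in C, T =1 T1}
                  & {in C, H =1 H1} \/ {in C, H =1 T1}].
Proof.
move=> sHT /sat_h_bigOr [p]; rewrite mem_filter.
move=> /andP [/asboolP [H1 [T1 [sHT1 PHT1 ->]]] _].
by move=> /(ht_char_agree sHT sHT1) [TT1 HH1]; exists H1, T1.
Qed.

End Interpolant.

Lemma ht_entails_amalgam a b H T H1 T1 : ht_entails a b ->
  subpred H T -> subpred H1 T1 -> ht_model H1 T1 a ->
  {in common a b, H =1 H1} -> {in common a b, T =1 T1} -> ht_model H T b.
Proof.
move=> ab sHT sHT1 aHT1 eH eT.
pose glue (F F1 : nat -> bool) x := if x \in atoms a then F1 x else F x.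
have sglue : subpred (glue H H1) (glue T T1).
  by move=> x; rewrite /glue; case: ifP => _; [apply: sHT1 | apply: sHT].
have glue_a F F1 : {in atoms a, F1 =1 glue F F1} by move=> x xa; rewrite /glue xa.
have glue_b F F1 : {in common a b, F =1 F1} -> {in atoms b, glue F F1 =1 F}.
  move=> eF x xb; rewrite /glue; case: ifP => // xa.
  by rewrite eF // mem_common xa.
apply: (eq_in_ht_model (glue_b _ _ eH) (glue_b _ _ eT)); apply: ab => //.
exact: eq_in_ht_model aHT1.
Qed.

Lemma cw_entails_of_ht_entails a p : ht_entails a p -> cw_entails a p.
Proof. by move=> ap; split=> // _ T [_ [aT _]]; apply: ap. Qed.

Lemma cw_entails_and_negs a b g : {subset atoms g <= atoms a} ->
  (exists T, eq_model (atoms g ++ atoms b) g T) ->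
  ht_entails (and_negs g (new_atoms a b)) b -> cw_entails g b.
Proof.
move=> ga Eg gb; split=> [_ T ET | /(_ Eg) //]; have [_ [gT _]] := ET.
apply: gb => //; apply/ht_model_and_negs => //; split=> // B.
rewrite mem_new_atoms => /andP [_]; apply: contra => /(eq_model_support ET).
exact: ga.
Qed.

Section HTInterpolant.
Variables a b : form.

Definition ht_interpolant : form := interpolant (common a b) (fun H T => ht_model H T a).

Lemma ht_entails_ht_interpolant : ht_entails a ht_interpolant.
Proof. by move=> H T sHT aHT; apply: ht_model_interpolant. Qed.

(* An HT-model of the interpolant agrees on the common atoms with an HT-model
   [<H1,T1>] of [a] or with [<T1,T1>], which is again a model of [a]. *)
Lemma ht_interpolant_ht_entails : ht_entails a b -> ht_entails ht_interpolant b.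
Proof.
move=> ab H T sHT [/(interpolant_agree sHT) [H1 [T1 [sHT1 aHT1 eT [eH|eH]]]] _].
  exact: ht_entails_amalgam aHT1 eH eT.
have aT1 : ht_model T1 T1 a by apply/ht_modelTT; case: aHT1 => /(sat_h_sat_t sHT1).
exact: ht_entails_amalgam aT1 eH eT.
Qed.

End HTInterpolant.

Section EquilibriumInterpolant.
Variables a b : form.
Local Notation V := (atoms a ++ atoms b).

Definition eq_interpolant : form :=
  interpolant (common a b) (fun H T => H = T /\ eq_model V a T).

Lemma eq_interpolant_agree H T : subpred H T -> sat_h H T eq_interpolant ->
  exists T0, [/\ eq_model V a T0, {in common a b, H =1 T0} & {in common a b, T =1 T0}].
Proof.
move=> sHT /(interpolant_agree sHT) [_ [T0 [_ [-> E0] eT eH]]].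
by exists T0; split=> //; case: eH.
Qed.

Lemma cw_entails_eq_interpolant : (exists T, eq_model V a T) -> cw_entails a eq_interpolant.
Proof.
have aV p : {subset atoms a <= atoms a ++ atoms p} by move=> x xa; rewrite mem_cat xa.
move=> [T0 E0]; split=> [_ T ET | []]; last by exists T0; apply: eq_model_transfer E0.
by apply: ht_model_interpolant => //; split=> //; apply: eq_model_transfer ET.
Qed.

Lemma and_negs_eq_interpolant : (forall T, eq_model V a T -> ht_model T T b) ->
  ht_entails (and_negs eq_interpolant (new_atoms a b)) b.
Proof.
move=> ab H T sHT /ht_model_and_negs -/(_ sHT) [[gH _] nTnew].
have [T0 [E0 eH eT]] := eq_interpolant_agree sHT gH.
suff [eHb eTb] : {in atoms b, T0 =1 H} /\ {in atoms b, T0 =1 T}.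
  exact: eq_in_ht_model eHb eTb (ab T0 E0).
have new0 x : x \in atoms b -> x \notin atoms a ->
    [/\ T0 x = false, H x = false & T x = false].
  move=> xb xa; have /negbTE nTx : ~~ T x by apply: nTnew; rewrite mem_new_atoms xb xa.
  split=> //; first by apply/negbTE; apply: contra xa => /(eq_model_support E0).
  by apply/negbTE/negP => /sHT; rewrite nTx.
split=> x xb; case: (boolP (x \in atoms a)) => xa.
- by rewrite eH // mem_common xa.
- by case: (new0 x xb xa) => -> -> _.
- by rewrite eT // mem_common xa.
- by case: (new0 x xb xa) => -> _ ->.
Qed.

Lemma eq_model_eq_interpolant : (exists T, eq_model V a T) ->
  exists T, eq_model (atoms eq_interpolant ++ atoms b) eq_interpolant T.
Proof.
move=> [T0 E0]; exists (fun x => (x \in common a b) && T0 x).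
have gT0 : ht_model T0 T0 eq_interpolant by apply: ht_model_interpolant.
split.
  by split=> // x /andP [+ _]; rewrite mem_common mem_cat => /andP [_ ->]; rewrite orbT.
split.
  apply: eq_in_ht_model gT0 => x /atoms_interpolant xC /=; by rewrite xC.
move=> [H [[sH _] [[x [/andP [xC T0x] nHx]] gH]]].
have [T1 [_ eH eT]] := eq_interpolant_agree sH (proj1 gH).
by move: nHx; rewrite eH // -eT //= xC T0x.
Qed.

End EquilibriumInterpolant.

Theorem proposition4 (a b : form) :
  cw_entails a b ->
  exists g : form,
    (forall x, x \in atoms g -> (x \in atoms a) && (x \in atoms b)) /\
    cw_entails a g /\
    ht_entails (and_negs g (new_atoms a b)) b /\
    cw_entails g b.
Proof.
move=> [eq_ab no_eq_ab].
have in_common g : {subset atoms g <= common a b} ->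
    forall x, x \in atoms g -> (x \in atoms a) && (x \in atoms b).
  by move=> gC x /gC; rewrite mem_common.
case: (pselect (exists T, eq_model (atoms a ++ atoms b) a T)) => [Ea | nEa].
- exists (eq_interpolant a b); split; first exact/in_common/atoms_interpolant.
  have ga : {subset atoms (eq_interpolant a b) <= atoms a}.
    by move=> x /atoms_interpolant; rewrite mem_common => /andP [].
  have gb := and_negs_eq_interpolant (eq_ab Ea).
  split; first exact: cw_entails_eq_interpolant.
  by split; last exact: cw_entails_and_negs ga (eq_model_eq_interpolant Ea) gb.
- have gb := ht_interpolant_ht_entails (no_eq_ab nEa).
  exists (ht_interpolant a b); split; first exact/in_common/atoms_interpolant.
  split; first exact/cw_entails_of_ht_entails/ht_entails_ht_interpolant.
  split; last exact: cw_entails_of_ht_entails.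
  by move=> H T sHT /ht_model_and_negs -/(_ sHT) [gHT _]; apply: gb.
Qed.
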